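(* Let $\mathbb{D}$ be $[0,1]^2$ or a mesh and let $A,B:\mathbb{D}\to\mathbb{R}$ satisfy (Q1) $A\le B$ and (Q2) $L^{(A,B)}(R)\ge0$ for all $R\in\mathfrak{R}$. If $$\min\{P_O^{(A,B)}(\mathbf{x}),\,B(\mathbf{x})-A(\mathbf{x})\}=0\quad\text{for all }\mathbf{x}\in\mathbb{D},$$ then $V_A(R)\ge0$ for every rectangle $R$ with corners in $\mathbb{D}$.
   Context: A rectangle is $[s_1,s_2]\times[t_1,t_2]$ with $s_1<s_2$, $t_1<t_2$ and corners in $\mathbb{D}$; main corners: southwest and northeast; opposite corners: southeast and northwest; $V_A(R)=A(s_1,t_1)+A(s_2,t_2)-A(s_2,t_1)-A(s_1,t_2)$. $\mathfrak{R}$ is the set of finite formal unions $R=R_1\sqcup\dots\sqcup R_n$ of rectangles (repetitions allowed), with multiplicity $m_R(\mathbf{y})=\sum_i m_{R_i}(\mathbf{y})$, where $m_{R_i}(\mathbf{y})$ is $1$ at main corners, $-1$ at opposite corners, $0$ elsewhere. $L^{(A,B)}(R)=\sum_{m_R(\mathbf{y})>0}B(\mathbf{y})m_R(\mathbf{y})+\sum_{m_R(\mathbf{y})<0}A(\mathbf{y})m_R(\mathbf{y})$; $P_O^{(A,B)}(\mathbf{x})=\inf\{L^{(A,B)}(R)/(-m_R(\mathbf{x})):R\in\mathfrak{R},m_R(\mathbf{x})<0\}$ with $\inf\emptyset=+\infty$. *)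

From Stdlib Require Import Reals Lra List ClassicalEpsilon.
Import ListNotations.
Open Scope R_scope.

Definition pt := (R * R)%type.

Definition unit_square (p : pt) : Prop :=
  0 <= fst p <= 1 /\ 0 <= snd p <= 1.

Definition grid_axis (I : list R) : Prop :=
  In 0 I /\ In 1 I /\ (forall s, In s I -> 0 <= s <= 1).

Definition is_mesh (D : pt -> Prop) : Prop :=
  exists I J : list R, grid_axis I /\ grid_axis J /\
    (forall p, D p <-> (In (fst p) I /\ In (snd p) J)).

Definition is_domain (D : pt -> Prop) : Prop :=
  (forall p, D p <-> unit_square p) \/ is_mesh D.

Record rect := Rect { s1 : R; s2 : R; t1 : R; t2 : R }.

Definition valid_rect (D : pt -> Prop) (r : rect) : Prop :=
  s1 r < s2 r /\ t1 r < t2 r /\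
  D (s1 r, t1 r) /\ D (s2 r, t2 r) /\ D (s2 r, t1 r) /\ D (s1 r, t2 r).

Definition V (A : pt -> R) (r : rect) : R :=
  A (s1 r, t1 r) + A (s2 r, t2 r) - A (s2 r, t1 r) - A (s1 r, t2 r).

Definition pt_eq_dec (x y : pt) : {x = y} + {x <> y}.
Proof.
  destruct x as [a b], y as [c d].
  destruct (Req_EM_T a c) as [H1|H1]; destruct (Req_EM_T b d) as [H2|H2];
    [left; subst; reflexivity | right; congruence | right; congruence | right; congruence].
Defined.

Definition ind (y z : pt) : R := if pt_eq_dec y z then 1 else 0.

Definition mult1 (r : rect) (y : pt) : R :=
  ind y (s1 r, t1 r) + ind y (s2 r, t2 r) - ind y (s2 r, t1 r) - ind y (s1 r, t2 r).

(* a formal union R_1 ⊔ ... ⊔ R_n is a list of rectangles (repetitions allowed) *)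
Definition union_valid (D : pt -> Prop) (Rs : list rect) : Prop :=
  forall r, In r Rs -> valid_rect D r.

Definition mult (Rs : list rect) (y : pt) : R :=
  fold_right (fun r acc => mult1 r y + acc) 0 Rs.

Definition corners (r : rect) : list pt :=
  [(s1 r, t1 r); (s2 r, t2 r); (s2 r, t1 r); (s1 r, t2 r)].

Definition support (Rs : list rect) : list pt :=
  nodup pt_eq_dec (flat_map corners Rs).

Definition Lterm (A B : pt -> R) (Rs : list rect) (y : pt) : R :=
  let m := mult Rs y in
  if Rlt_dec 0 m then B y * m else if Rlt_dec m 0 then A y * m else 0.

Definition L (A B : pt -> R) (Rs : list rect) : R :=
  fold_right (fun y acc => Lterm A B Rs y + acc) 0 (support Rs).

Inductive ER := Fin (r : R) | PInf | MInf.

Definition ER_le (e f : ER) : Prop :=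
  match e, f with
  | MInf, _ => True
  | _, PInf => True
  | Fin a, Fin b => a <= b
  | _, _ => False
  end.

Definition ER_min (e f : ER) : ER :=
  match e, f with
  | MInf, _ | _, MInf => MInf
  | PInf, g | g, PInf => g
  | Fin a, Fin b => Fin (Rmin a b)
  end.

(* e is the infimum (in the extended reals) of S; inf of empty set = +oo *)
Definition is_ext_inf (S : R -> Prop) (e : ER) : Prop :=
  (forall s, S s -> ER_le e (Fin s)) /\
  (forall f, (forall s, S s -> ER_le f (Fin s)) -> ER_le f e).

Definition ext_inf (S : R -> Prop) : ER :=
  epsilon (inhabits PInf) (fun e => is_ext_inf S e).

Definition PO_set (D : pt -> Prop) (A B : pt -> R) (x : pt) (v : R) : Prop :=
  exists Rs : list rect, union_valid D Rs /\ mult Rs x < 0 /\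
    v = L A B Rs / (- mult Rs x).

Definition P_O (D : pt -> Prop) (A B : pt -> R) (x : pt) : ER :=
  ext_inf (PO_set D A B x).

(* Write L_B for L^(A,B).  L_B(R) is a finite sum over corner points y of
   phi(A y, B y, m_R(y)), where phi(a,b,m) = b m for m > 0 and a m for m < 0.
   For a <= b the integrand is sublinear in m, so L_B is subadditive and
   positively homogeneous under repetition of rectangles; moreover L_B only
   sees B at points of positive multiplicity.

   Key step (lowering one point): if (Q1), (Q2) hold for (A,B) and at y0 either
   B y0 = A y0 or P_O(y0) = 0, then (Q2) still holds for the function B' equal
   to B except B' y0 = A y0.  Given R with k = m_R(y0) > 0 and R' with
   m_R'(y0) = -n < 0 and L_B(R') <= eps n, the union S of n copies of R and k
   copies of R' has multiplicity 0 at y0 (multiplicities are integers), hence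
   0 <= L_B(S) = L_B'(S) <= n L_B'(R) + k L_B(R') <= n L_B'(R) + k n eps, and
   eps -> 0 gives L_B'(R) >= 0.

   Iterating, B may be lowered to A on any finite subset of D; lowering it at
   the four corners of a rectangle R and applying (Q2) to R alone yields
   exactly V_A(R) >= 0.  The file develops finite sums, the integrand phi,
   multiplicities, the functional L, the extended infimum P_O, the lowering
   step, and finally the theorem. *)

From Pilot Require Import Defs.
From Stdlib Require Import Reals List Lra Lia ZArith Classical ClassicalEpsilon.
Import ListNotations.
Open Scope R_scope.

Definition sumL (l : list pt) (f : pt -> R) : R :=
  fold_right (fun y acc => f y + acc) 0 l.

Lemma sumL_app l1 l2 f : sumL (l1 ++ l2) f = sumL l1 f + sumL l2 f.
Proof. unfold sumL; induction l1 as [|a l1 IH]; cbn; [ring | rewrite IH; ring]. Qed.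

Lemma sumL_ext l f g : (forall y, f y = g y) -> sumL l f = sumL l g.
Proof. intro H; induction l as [|a l IH]; unfold sumL in *; cbn; [reflexivity|]. rewrite H, IH; reflexivity. Qed.

Lemma sumL_le l f g : (forall y, f y <= g y) -> sumL l f <= sumL l g.
Proof. intro H; induction l as [|a l IH]; unfold sumL in *; cbn; [lra|]. specialize (H a); lra. Qed.

Lemma sumL_lin l f g n k :
  sumL l (fun y => n * f y + k * g y) = n * sumL l f + k * sumL l g.
Proof. induction l as [|a l IH]; unfold sumL in *; cbn; [ring|]. rewrite IH; ring. Qed.

Lemma sumL_zero l f : (forall y, In y l -> f y = 0) -> sumL l f = 0.
Proof.
  induction l as [|a l IH]; intro H; unfold sumL in *; cbn; [reflexivity|].
  rewrite H by (now left). rewrite IH by (intros; apply H; now right). ring.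
Qed.

Lemma sumL_same_support l1 : forall l2 f, NoDup l1 -> NoDup l2 ->
  (forall y, f y <> 0 -> (In y l1 <-> In y l2)) -> sumL l1 f = sumL l2 f.
Proof.
  induction l1 as [|a l1 IH]; intros l2 f N1 N2 Hsupp.
  - symmetry; apply sumL_zero; intros y Hy.
    destruct (Req_EM_T (f y) 0) as [E|E]; [exact E|].
    destruct (proj2 (Hsupp y E) Hy).
  - apply NoDup_cons_iff in N1 as [Na N1].
    change (f a + sumL l1 f = sumL l2 f).
    destruct (Req_EM_T (f a) 0) as [Ea|Ea].
    + rewrite Ea, Rplus_0_l; apply IH; auto.
      intros y Hy; rewrite <- (Hsupp y Hy).
      split; [now right | intros [<-|H]; [contradiction|exact H]].
    + destruct (in_split a l2) as (l2a & l2b & ->); [apply (Hsupp a Ea); now left|].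
      pose proof (NoDup_remove_2 _ _ _ N2) as Na2.
      rewrite sumL_app; change (sumL (a :: l2b) f) with (f a + sumL l2b f).
      rewrite (IH (l2a ++ l2b) f N1 (NoDup_remove_1 _ _ _ N2)), sumL_app; [ring|].
      intros y Hy; specialize (Hsupp y Hy); rewrite !in_app_iff in *; cbn in Hsupp.
      split; intro H; assert (a <> y) by (intros <-; tauto); tauto.
Qed.

Definition phi (a b m : R) : R :=
  if Rlt_dec 0 m then b * m else if Rlt_dec m 0 then a * m else 0.

Lemma Lterm_phi A B Rs y : Lterm A B Rs y = phi (A y) (B y) (mult Rs y).
Proof. reflexivity. Qed.

Lemma phi0 a b : phi a b 0 = 0.
Proof. unfold phi; destruct (Rlt_dec 0 0); [lra|]; destruct (Rlt_dec 0 0); lra. Qed.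

Lemma phi_one a b : phi a b 1 = b.
Proof. unfold phi; destruct (Rlt_dec 0 1); lra. Qed.

Lemma phi_minus_one a b : phi a b (-1) = - a.
Proof. unfold phi; destruct (Rlt_dec 0 (-1)), (Rlt_dec (-1) 0); lra. Qed.

Lemma phi_max a b m : a <= b -> phi a b m = Rmax (a * m) (b * m).
Proof.
  intro Hab; unfold phi, Rmax.
  destruct (Rle_dec (a * m) (b * m)), (Rlt_dec 0 m), (Rlt_dec m 0); try nra.
  replace m with 0 by lra; ring.
Qed.

Lemma phi_sublinear a b n k m1 m2 : a <= b -> 0 <= n -> 0 <= k ->
  phi a b (n * m1 + k * m2) <= n * phi a b m1 + k * phi a b m2.
Proof.
  intros Hab Hn Hk; rewrite !phi_max by exact Hab.
  pose proof (Rmax_l (a * m1) (b * m1)); pose proof (Rmax_r (a * m1) (b * m1)).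
  pose proof (Rmax_l (a * m2) (b * m2)); pose proof (Rmax_r (a * m2) (b * m2)).
  apply Rmax_lub; nra.
Qed.

Lemma phi_mono a b b' m : b' <= b -> phi a b' m <= phi a b m.
Proof. intro H; unfold phi; destruct (Rlt_dec 0 m); [nra|]; destruct (Rlt_dec m 0); lra. Qed.

Lemma mult_app l1 l2 y : mult (l1 ++ l2) y = mult l1 y + mult l2 y.
Proof. unfold mult; induction l1 as [|r l1 IH]; cbn; [ring | rewrite IH; ring]. Qed.

Fixpoint rep (n : nat) (Rs : list rect) : list rect :=
  match n with O => [] | S n' => Rs ++ rep n' Rs end.

Lemma mult_rep n Rs y : mult (rep n Rs) y = INR n * mult Rs y.
Proof. induction n as [|n IH]; cbn [rep]; [cbn; ring|]. rewrite mult_app, IH, S_INR; ring. Qed.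

Lemma union_valid_app D l1 l2 :
  union_valid D l1 -> union_valid D l2 -> union_valid D (l1 ++ l2).
Proof. intros H1 H2 r Hr; apply in_app_iff in Hr as [Hr|Hr]; auto. Qed.

Lemma union_valid_rep D n Rs : union_valid D Rs -> union_valid D (rep n Rs).
Proof.
  intro H; induction n as [|n IH]; cbn [rep]; [intros r []|].
  now apply union_valid_app.
Qed.

Lemma mult1_nz r y : mult1 r y <> 0 -> In y (corners r).
Proof.
  intro H; destruct (in_dec pt_eq_dec y (corners r)) as [I|I]; [exact I|].
  exfalso; apply H; cbn in I; unfold mult1, Defs.ind.
  repeat destruct pt_eq_dec; subst; first [ring | exfalso; apply I; auto 6].
Qed.

Lemma mult_nz Rs y : mult Rs y <> 0 -> In y (flat_map corners Rs).
Proof.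
  induction Rs as [|r Rs IH]; intro H; [cbn in H; lra|].
  change (mult1 r y + mult Rs y <> 0) in H.
  apply in_app_iff; destruct (Req_EM_T (mult1 r y) 0) as [E|E].
  - right; apply IH; lra.
  - left; now apply mult1_nz.
Qed.

Lemma mult_nz_D D Rs y : union_valid D Rs -> mult Rs y <> 0 -> D y.
Proof.
  intros HV H; apply mult_nz, in_flat_map in H as [r [Hr Hy]].
  destruct (HV r Hr) as (_ & _ & H1 & H2 & H3 & H4).
  destruct Hy as [<-|[<-|[<-|[<-|[]]]]]; assumption.
Qed.

Lemma mult_integer Rs y : exists z, mult Rs y = IZR z.
Proof.
  assert (Hind : forall p, exists z, Defs.ind y p = IZR z).
  { intro p; unfold Defs.ind; destruct pt_eq_dec; [exists 1%Z | exists 0%Z]; reflexivity. }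
  induction Rs as [|r Rs [z Hz]]; [now exists 0%Z|].
  change (exists z', mult1 r y + mult Rs y = IZR z'); unfold mult1.
  destruct (Hind (s1 r, t1 r)) as [a1 ->], (Hind (s2 r, t2 r)) as [a2 ->],
    (Hind (s2 r, t1 r)) as [a3 ->], (Hind (s1 r, t2 r)) as [a4 ->].
  exists (a1 + a2 - a3 - a4 + z)%Z; rewrite Hz, plus_IZR, !minus_IZR, !plus_IZR; ring.
Qed.

Lemma pos_integer_nat x : (exists z, x = IZR z) -> 0 < x -> exists n : nat, x = INR n.
Proof.
  intros [z ->] H; apply lt_0_IZR in H; exists (Z.to_nat z).
  rewrite INR_IZR_INZ, Z2Nat.id; [reflexivity | lia].
Qed.

Lemma L_as_sum A B Rs U : NoDup U -> (forall y, mult Rs y <> 0 -> In y U) ->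
  L A B Rs = sumL U (Lterm A B Rs).
Proof.
  intros NU HU; apply sumL_same_support; [apply NoDup_nodup | exact NU |].
  intros y Hy; rewrite Lterm_phi in Hy.
  assert (Hm : mult Rs y <> 0) by (intro E; apply Hy; rewrite E; apply phi0).
  split; intros _; [now apply HU | now apply nodup_In, mult_nz].
Qed.

Lemma L_ext_pos A B B' Rs : (forall y, 0 < mult Rs y -> B y = B' y) ->
  L A B Rs = L A B' Rs.
Proof.
  intro H; apply sumL_ext; intro y; rewrite !Lterm_phi; unfold phi.
  destruct (Rlt_dec 0 (mult Rs y)) as [P|P]; [rewrite (H y P)|]; reflexivity.
Qed.

Lemma L_mono A B B' Rs : (forall y, B' y <= B y) -> L A B' Rs <= L A B Rs.
Proof. intro H; apply sumL_le; intro y; rewrite !Lterm_phi; apply phi_mono, H. Qed.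

Lemma L_repeat_sublinear D A B Rs1 Rs2 n k :
  (forall y, D y -> A y <= B y) -> union_valid D Rs1 -> union_valid D Rs2 ->
  L A B (rep n Rs1 ++ rep k Rs2) <= INR n * L A B Rs1 + INR k * L A B Rs2.
Proof.
  intros QA V1 V2; set (U := support (Rs1 ++ Rs2)).
  assert (HU : forall y, mult Rs1 y <> 0 \/ mult Rs2 y <> 0 -> In y U).
  { intros y Hy; apply nodup_In; rewrite flat_map_app, in_app_iff.
    destruct Hy; [left | right]; now apply mult_nz. }
  assert (Hm : forall y, mult (rep n Rs1 ++ rep k Rs2) y
                        = INR n * mult Rs1 y + INR k * mult Rs2 y).
  { intro y; now rewrite mult_app, !mult_rep. }
  assert (NU : NoDup U) by apply NoDup_nodup.
  rewrite (L_as_sum A B Rs1 U NU), (L_as_sum A B Rs2 U NU) by auto.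
  rewrite (L_as_sum A B _ U NU).
  2:{ intros y Hy; apply HU; rewrite Hm in Hy.
      destruct (Req_EM_T (mult Rs1 y) 0) as [E|E]; [right | now left].
      intro E'; apply Hy; rewrite E, E'; ring. }
  rewrite <- sumL_lin; apply sumL_le; intro y; rewrite !Lterm_phi, Hm.
  destruct (Req_EM_T (mult Rs1 y) 0) as [E1|E1], (Req_EM_T (mult Rs2 y) 0) as [E2|E2].
  - rewrite E1, E2, !Rmult_0_r, Rplus_0_r, !phi0; lra.
  - apply phi_sublinear; [apply QA, (mult_nz_D D Rs2 y V2 E2) | apply pos_INR | apply pos_INR].
  - apply phi_sublinear; [apply QA, (mult_nz_D D Rs1 y V1 E1) | apply pos_INR | apply pos_INR].
  - apply phi_sublinear; [apply QA, (mult_nz_D D Rs1 y V1 E1) | apply pos_INR | apply pos_INR].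
Qed.

Lemma corners_NoDup r : s1 r < s2 r -> t1 r < t2 r -> NoDup (corners r).
Proof.
  intros Hs Ht; unfold corners.
  repeat constructor; cbn; intro H; repeat destruct H as [H|H];
    try injection H; lra.
Qed.

Lemma mult1_corners r : s1 r < s2 r -> t1 r < t2 r ->
  mult1 r (s1 r, t1 r) = 1 /\ mult1 r (s2 r, t2 r) = 1 /\
  mult1 r (s2 r, t1 r) = -1 /\ mult1 r (s1 r, t2 r) = -1.
Proof.
  intros Hs Ht; unfold mult1, Defs.ind.
  repeat split; repeat destruct pt_eq_dec; try lra; exfalso;
    match goal with
    | E : (_, _) = (_, _) |- _ => injection E; lra
    | E : ?p <> ?p |- _ => now apply E
    end.
Qed.

Lemma L_single_rect A B r : s1 r < s2 r -> t1 r < t2 r ->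
  L A B [r] = B (s1 r, t1 r) + B (s2 r, t2 r) - A (s2 r, t1 r) - A (s1 r, t2 r).
Proof.
  intros Hs Ht.
  assert (Hm : forall y, mult [r] y = mult1 r y) by (intro y; cbn; ring).
  rewrite (L_as_sum A B [r] (corners r) (corners_NoDup r Hs Ht))
    by (intros y Hy; rewrite Hm in Hy; now apply mult1_nz).
  destruct (mult1_corners r Hs Ht) as (M1 & M2 & M3 & M4).
  unfold sumL, corners; cbn [fold_right]; rewrite !Lterm_phi, !Hm, M1, M2, M3, M4.
  rewrite !phi_one, !phi_minus_one; ring.
Qed.

Lemma ext_inf_exists S : exists e, is_ext_inf S e.
Proof.
  destruct (classic (exists s, S s)) as [[s0 Hs0]|NE].
  2:{ exists PInf; split; [intros s Hs; exfalso; eauto | intros [] _; exact I]. }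
  destruct (classic (exists lb, forall s, S s -> lb <= s)) as [[lb Hlb]|NB].
  - destruct (completeness (fun x => S (- x))) as [m [Hm1 Hm2]].
    + exists (- lb); intros x Hx; specialize (Hlb _ Hx); lra.
    + exists (- s0); now rewrite Ropp_involutive.
    + exists (Fin (- m)); split.
      * intros s Hs; cbn.
        assert (- s <= m) by (apply Hm1; now rewrite Ropp_involutive); lra.
      * intros [a| |] Hf; cbn; [| exact (Hf s0 Hs0) | exact I].
        assert (m <= - a); [|lra].
        apply Hm2; intros x Hx; specialize (Hf _ Hx); cbn in Hf; lra.
  - exists MInf; split; [intros; exact I|].
    intros [a| |] Hf; cbn; [| exact (Hf s0 Hs0) | exact I].
    apply NB; exists a; exact Hf.
Qed.

Lemma ext_inf_zero_approx S eps : ext_inf S = Fin 0 -> 0 < eps ->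
  exists s, S s /\ s < eps.
Proof.
  intros H0 Heps.
  assert (Hinf : is_ext_inf S (Fin 0)).
  { rewrite <- H0; unfold ext_inf; apply epsilon_spec, ext_inf_exists. }
  apply NNPP; intro N.
  assert (Hle : ER_le (Fin eps) (Fin 0)); [|cbn in Hle; lra].
  apply (proj2 Hinf); intros s Hs; cbn.
  apply Rnot_lt_le; intro Hlt; apply N; eauto.
Qed.

(* P_O(x) = 0 in usable form: unions with negative multiplicity at x whose
   cost per unit of multiplicity is arbitrarily small. *)
Definition PO_vanishes (D : pt -> Prop) (A B : pt -> R) (x : pt) : Prop :=
  forall eps, 0 < eps -> exists Rs,
    union_valid D Rs /\ mult Rs x < 0 /\ L A B Rs <= eps * - mult Rs x.

Lemma PO_zero_vanishes D A B x : P_O D A B x = Fin 0 -> PO_vanishes D A B x.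
Proof.
  intros HP eps Heps.
  destruct (ext_inf_zero_approx _ eps HP Heps) as (s & (Rs & HV & Hm & ->) & Hlt).
  exists Rs; split; [exact HV | split; [exact Hm |]].
  replace (L A B Rs) with (L A B Rs / - mult Rs x * - mult Rs x) by (field; lra).
  apply Rmult_le_compat_r; lra.
Qed.

Lemma min_zero_dichotomy D A B x :
  ER_min (P_O D A B x) (Fin (B x - A x)) = Fin 0 -> B x = A x \/ PO_vanishes D A B x.
Proof.
  destruct (P_O D A B x) as [a| |] eqn:HP; cbn; intro H; try discriminate.
  - injection H; unfold Rmin; destruct Rle_dec; intro E;
      [right; apply PO_zero_vanishes; now rewrite HP, E | left; lra].
  - injection H; lra.
Qed.

Lemma PO_vanishes_mono D A B B' x :
  (forall y, B' y <= B y) -> PO_vanishes D A B x -> PO_vanishes D A B' x.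
Proof.
  intros Hle H eps Heps; destruct (H eps Heps) as (Rs & HV & Hm & HL).
  exists Rs; split; [exact HV | split; [exact Hm |]].
  eapply Rle_trans; [apply L_mono, Hle | exact HL].
Qed.

Lemma nonneg_of_small_loss x c : 0 < c ->
  (forall eps, 0 < eps -> - (c * eps) <= x) -> 0 <= x.
Proof.
  intros Hc H; apply Rnot_lt_le; intro Hx.
  assert (Heps : 0 < - x / (2 * c)) by (apply Rdiv_lt_0_compat; lra).
  specialize (H _ Heps).
  replace (c * (- x / (2 * c))) with (- x / 2) in H by (field; lra); lra.
Qed.

Section LowerOnePoint.

Variables (D : pt -> Prop) (A B B' : pt -> R) (y0 : pt).
Hypothesis Q1 : forall x, D x -> A x <= B x.
Hypothesis Q2 : forall Rs, union_valid D Rs -> 0 <= L A B Rs.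
Hypothesis HB'0 : B' y0 = A y0.
Hypothesis HB' : forall y, y <> y0 -> B' y = B y.

Lemma lowered_L_off Rs : mult Rs y0 <= 0 -> L A B' Rs = L A B Rs.
Proof.
  intro Hk; apply L_ext_pos; intros y Hy.
  destruct (pt_eq_dec y y0) as [->|Ny]; [lra | now apply HB'].
Qed.

Lemma lowered_Q1 y : D y -> A y <= B' y.
Proof.
  intro Dy; destruct (pt_eq_dec y y0) as [->|Ny]; [lra | rewrite HB' by exact Ny; auto].
Qed.

Lemma lowered_le : D y0 -> forall y, B' y <= B y.
Proof.
  intros Dy0 y; destruct (pt_eq_dec y y0) as [->|Ny];
    [rewrite HB'0; auto | rewrite HB' by exact Ny; lra].
Qed.

(* The key estimate: combining n copies of R with k copies of R' cancels the
   multiplicity at y0, so (Q2) for B bounds n L_B'(R) + k L_B(R') below by 0. *)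
Lemma lowered_combination Rs Rs' :
  union_valid D Rs -> union_valid D Rs' -> 0 < mult Rs y0 -> mult Rs' y0 < 0 ->
  0 <= - mult Rs' y0 * L A B' Rs + mult Rs y0 * L A B Rs'.
Proof.
  intros V V' Hk Hn.
  destruct (pos_integer_nat _ (mult_integer Rs y0) Hk) as [k Hkk].
  destruct (pos_integer_nat (- mult Rs' y0)) as [n Hnn]; [| lra |].
  { destruct (mult_integer Rs' y0) as [z ->]; exists (- z)%Z; now rewrite opp_IZR. }
  set (S := rep n Rs ++ rep k Rs').
  assert (HS0 : mult S y0 = 0).
  { unfold S; rewrite mult_app, !mult_rep, <- Hkk, <- Hnn; ring. }
  pose proof (Q2 S (union_valid_app _ _ _ (union_valid_rep _ n _ V)
                                       (union_valid_rep _ k _ V'))) as HLS.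
  rewrite <- lowered_L_off in HLS by lra.
  pose proof (L_repeat_sublinear D A B' Rs Rs' n k lowered_Q1 V V') as Hsub.
  rewrite <- Hkk, <- Hnn in Hsub; fold S in Hsub.
  assert (Hmono : mult Rs y0 * L A B' Rs' <= mult Rs y0 * L A B Rs').
  { apply Rmult_le_compat_l; [lra|].
    apply L_mono, lowered_le, (mult_nz_D D Rs'); [exact V' | lra]. }
  lra.
Qed.

Lemma lower_one_point (Hy0 : B y0 = A y0 \/ PO_vanishes D A B y0) :
  forall Rs, union_valid D Rs -> 0 <= L A B' Rs.
Proof.
  intros Rs HRs; destruct Hy0 as [Eq|Hvan].
  { rewrite (L_ext_pos A B' B) by (intros y _; destruct (pt_eq_dec y y0) as [->|Ny];
      [congruence | now apply HB']); now apply Q2. }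
  destruct (Rle_lt_dec (mult Rs y0) 0) as [Hk|Hk]; [rewrite lowered_L_off; auto|].
  apply (nonneg_of_small_loss _ (mult Rs y0) Hk); intros eps Heps.
  destruct (Hvan eps Heps) as (Rs' & V' & Hn & HL).
  pose proof (lowered_combination Rs Rs' HRs V' Hk Hn) as Hcomb.
  assert (Hscaled : mult Rs y0 * L A B Rs' <= mult Rs y0 * (eps * - mult Rs' y0))
    by (apply Rmult_le_compat_l; lra).
  apply (Rmult_le_reg_l (- mult Rs' y0)); [lra | nra].
Qed.

End LowerOnePoint.

Definition lower (A B : pt -> R) (ys : list pt) (y : pt) : R :=
  if in_dec pt_eq_dec y ys then A y else B y.

Lemma lower_in A B ys y : In y ys -> lower A B ys y = A y.
Proof. unfold lower; destruct in_dec; tauto. Qed.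

Lemma lower_notin A B ys y : ~ In y ys -> lower A B ys y = B y.
Proof. unfold lower; destruct in_dec; tauto. Qed.

Lemma lower_finite_set D A B
  (Q1 : forall x, D x -> A x <= B x)
  (Q2 : forall Rs, union_valid D Rs -> 0 <= L A B Rs)
  (Hpt : forall y, D y -> B y = A y \/ PO_vanishes D A B y) :
  forall ys, (forall y, In y ys -> D y) ->
  forall Rs, union_valid D Rs -> 0 <= L A (lower A B ys) Rs.
Proof.
  induction ys as [|y0 ys IH]; intros Hys.
  { intros Rs HRs; rewrite (L_ext_pos A _ B) by (intros y _; now apply lower_notin).
    now apply Q2. }
  assert (Hlow : forall y, lower A B ys y <= B y).
  { intro y; destruct (in_dec pt_eq_dec y ys) as [I|N].
    - rewrite lower_in by exact I; apply Q1, Hys; now right.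
    - rewrite lower_notin by exact N; lra. }
  apply (lower_one_point D A (lower A B ys) _ y0).
  - intros x Dx; destruct (in_dec pt_eq_dec x ys) as [I|N];
      [rewrite lower_in by exact I; lra | rewrite lower_notin by exact N; auto].
  - apply IH; intros y Hy; apply Hys; now right.
  - apply lower_in; now left.
  - intros y Ny; destruct (in_dec pt_eq_dec y ys) as [I|N].
    + rewrite !lower_in by (try right; exact I); reflexivity.
    + rewrite !lower_notin by (try (intros [E|E]; [congruence | contradiction]); exact N).
      reflexivity.
  - destruct (Hpt y0 (Hys y0 (or_introl eq_refl))) as [E|Hvan].
    + left; destruct (in_dec pt_eq_dec y0 ys) as [I|N];
        [now apply lower_in | now rewrite lower_notin].
    + right; exact (PO_vanishes_mono D A B _ y0 Hlow Hvan).
Qed.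

Theorem mainTheorem13 (D : pt -> Prop) (HD : is_domain D) (A B : pt -> R)
  (Q1 : forall x, D x -> A x <= B x)
  (Q2 : forall Rs : list rect, union_valid D Rs -> 0 <= L A B Rs)
  (Hmin : forall x, D x -> ER_min (P_O D A B x) (Fin (B x - A x)) = Fin 0) :
  forall r : rect, valid_rect D r -> 0 <= V A r.
Proof.
  intros r Hr; pose proof Hr as (Hs & Ht & D1 & D2 & D3 & D4).
  assert (Hpt : forall y, D y -> B y = A y \/ PO_vanishes D A B y)
    by (intros y Dy; now apply min_zero_dichotomy, Hmin).
  assert (Hcorners : forall y, In y (corners r) -> D y)
    by (intros y [<-|[<-|[<-|[<-|[]]]]]; assumption).
  assert (Hsingle : union_valid D [r]) by (intros r' [<-|[]]; exact Hr).
  pose proof (lower_finite_set D A B Q1 Q2 Hpt (corners r) Hcorners [r] Hsingle) as HL.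
  rewrite L_single_rect, !lower_in in HL by (cbn; tauto).
  unfold V; lra.
Qed.
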